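(* Let $n\ge 0$ and let $\Psi=(\psi_0,\dots,\psi_n)$ with $\psi_k\in(-\tfrac{\pi}{2},\tfrac{\pi}{2})$ for all $k$. For $x\in[-1,1]$ let $\theta\in[0,\pi]$ satisfy $\cos\theta=x$. (a) Define $\boldsymbol\gamma:\mathbb Z\to\mathbb C$ by $\gamma_k:=\tan\psi_k$ for $k=0,\dots,n$ and $\gamma_k=0$ otherwise. Then for all $\theta\in[0,\pi]$, $$\begin{pmatrix}1&0\\0&i\end{pmatrix} H\, U_n(\Psi,\cos\theta)\, H \begin{pmatrix}1&0\\0&-i\end{pmatrix}=\overbrace{\boldsymbol\gamma}(e^{2i\theta})\begin{pmatrix}e^{in\theta}&0\\0&e^{-in\theta}\end{pmatrix}.$$ (b) Define $\boldsymbol\gamma$ by $\gamma_k:=i\tan\psi_k$ for $k=0,\dots,n$ and $\gamma_k=0$ otherwise. Then for all $\theta\in[0,\pi]$, $$H\, U_n(\Psi,\cos\theta)\, H=\overbrace{\boldsymbol\gamma}(e^{2i\theta})\begin{pmatrix}e^{in\theta}&0\\0&e^{-in\theta}\end{pmatrix}.$$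
   Context: $Z=\begin{pmatrix}1&0\\0&-1\end{pmatrix}$, $H=\frac1{\sqrt2}\begin{pmatrix}1&1\\1&-1\end{pmatrix}$. For $x\in[-1,1]$, $W(x):=\begin{pmatrix}x& i\sqrt{1-x^2}\\ i\sqrt{1-x^2}&x\end{pmatrix}$, and $U_n(\Psi,x):=e^{i\psi_0 Z}\prod_{k=1}^n\big(W(x)e^{i\psi_k Z}\big)$ (ordered product, factors with increasing $k$ from left to right). For a compactly supported $\boldsymbol\gamma:\mathbb Z\to\mathbb C$ supported in $[m,n']$, its nonlinear Fourier transform (NLFT) is the matrix-valued function $\overbrace{\boldsymbol\gamma}(z):=\prod_{k=m}^{n'}\frac{1}{\sqrt{1+|\gamma_k|^2}}\begin{pmatrix}1&\gamma_k z^k\\-\overline{\gamma_k}z^{-k}&1\end{pmatrix}$, $z\in\mathbb C\setminus\{0\}$, with the product ordered by increasing $k$ from left to right. *)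

From HB Require Import structures.
From mathcomp Require Import all_boot all_order all_algebra.
From mathcomp Require Import complex.
From mathcomp Require Import reals trigo.
Set Implicit Arguments. Unset Strict Implicit. Unset Printing Implicit Defensive.
Import Order.TTheory GRing.Theory Num.Theory.
Local Open Scope ring_scope.
Local Open Scope complex_scope.

Section Defs.
Variable R : realType.
Local Notation C := R[i].

Definition Ii : C := 0 +i* 1.

Definition mx2 (a b c d : C) : 'M[C]_2 :=
  \matrix_(i < 2, j < 2)
    if (i == 0 :> nat) then (if (j == 0 :> nat) then a else b)
    else (if (j == 0 :> nat) then c else d).

Definition expi (t : R) : C := (cos t) +i* (sin t).

Definition Zm : 'M[C]_2 := mx2 1 0 0 (-1).
Definition Hm : 'M[C]_2 :=
  ((Num.sqrt (2 : R))^-1)%:C *: mx2 1 1 1 (-1).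

Definition Wm (x : R) : 'M[C]_2 :=
  let s := Ii * (Num.sqrt (1 - x ^+ 2))%:C in mx2 (x%:C) s s (x%:C).

Definition expiZ (psi : R) : 'M[C]_2 := mx2 (expi psi) 0 0 (expi (- psi)).

Definition Un (n : nat) (Psi : nat -> R) (x : R) : 'M[C]_2 :=
  expiZ (Psi 0%N) * \prod_(1 <= k < n.+1) (Wm x * expiZ (Psi k)).

Definition csqnorm (g : C) : R := (complex.Re g) ^+ 2 + (complex.Im g) ^+ 2.

Definition nlft_factor (g : int -> C) (k : int) (z : C) : 'M[C]_2 :=
  ((Num.sqrt (1 + csqnorm (g k)))^-1)%:C *:
    mx2 1 (g k * z ^ k) (- (conjc (g k)) * z ^ (- k)) 1.

Definition nlft (g : int -> C) (m : int) (len : nat) (z : C) : 'M[C]_2 :=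
  \prod_(i < len.+1) nlft_factor g (m + (i : nat)%:Z) z.

End Defs.

(* Conjugation by H sends W(cos t) to e^{i t Z} (for t in [0, pi], where
   sqrt(1 - cos^2 t) = sin t) and e^{i p Z} to e^{i p X}, so
   H U_n H = e^{i psi_0 X} prod_k (e^{i t Z} e^{i psi_k X}).  Commuting the
   diagonal factors to the right, the k-th block becomes
   e^{i k t Z} e^{i psi_k X} e^{-i k t Z}, which is the k-th NLFT factor at
   z = e^{2 i t} with gamma_k = i tan psi_k: the normalisation
   (1 + tan^2 psi)^{-1/2} equals cos psi because |psi| < pi/2.  This is (b);
   conjugating (b) by diag(1, i) multiplies gamma by -i, which gives (a). *)
From HB Require Import structures.
From mathcomp Require Import all_boot all_order all_algebra.
From mathcomp Require Import complex.
From mathcomp Require Import reals trigo.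
From mathcomp Require Import ring.
Import Order.TTheory GRing.Theory Num.Theory.
Local Open Scope ring_scope.
Local Open Scope complex_scope.

Section Conjugation.
Variables (A : pzRingType) (M N : A).
Hypotheses (NM : N * M = 1) (MN : M * N = 1).

Lemma conj_mul (X Y : A) : M * (X * Y) * N = (M * X * N) * (M * Y * N).
Proof. by rewrite !mulrA -(mulrA (M * X) N M) NM mulr1. Qed.

Lemma conj_prod (I : Type) (r : seq I) (P : pred I) (F : I -> A) :
  M * (\prod_(i <- r | P i) F i) * N = \prod_(i <- r | P i) (M * F i * N).
Proof.
by apply: (big_morph (fun X => M * X * N)) => [X Y|]; rewrite ?conj_mul ?mulr1.
Qed.

End Conjugation.

Lemma prod_interleave_pow (A : pzRingType) (D : A) (B F : nat -> A) (m : nat) :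
  (forall k, (k <= m)%N -> F k * D ^+ k = D ^+ k * B k) ->
  B 0%N * \prod_(1 <= k < m.+1) (D * B k) = (\prod_(i < m.+1) F i) * D ^+ m.
Proof.
elim: m => [|m IH] FB.
  by rewrite big_geq // big_ord1 !mulr1 -[F 0%N]mulr1 -(expr0 D) FB // expr0 mul1r.
rewrite big_nat_recr //= big_ord_recr /= mulrA IH => [|k km]; last first.
  by apply: FB; rewrite (leq_trans km).
by rewrite -mulrA (mulrA (D ^+ m)) -exprSr -FB // mulrA.
Qed.

Section Matrices.
Variable R : realType.
Local Notation C := R[i].

Lemma mul_mx2 (a b c d a' b' c' d' : C) :
  mx2 a b c d * mx2 a' b' c' d' =
  mx2 (a * a' + b * c') (a * b' + b * d') (c * a' + d * c') (c * b' + d * d').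
Proof.
apply/matrixP => i j; rewrite !mxE !big_ord_recl big_ord0 !mxE /=.
by case: i j => [[|[|i]] ?] [[|[|j]] ?] /=; rewrite ?addr0.
Qed.

Lemma scale_mx2 (k a b c d : C) :
  k *: mx2 a b c d = mx2 (k * a) (k * b) (k * c) (k * d).
Proof.
by apply/matrixP => i j; rewrite !mxE; case: i j => [[|[|i]] ?] [[|[|j]] ?].
Qed.

Lemma mx2_id : mx2 1 0 0 1 = 1 :> 'M[C]_2.
Proof.
by apply/matrixP => i j; rewrite !mxE; case: i j => [[|[|i]] ?] [[|[|j]] ?].
Qed.

(* Reduces an identity in R[i] to two identities in R. *)
Ltac simpc_real := rewrite /Ii ?(-complexr0);
  try change (1 : C) with ((1 : R) +i* (0 : R));
  try change (0 : C) with ((0 : R) +i* (0 : R)); simpc.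

Lemma expiD (a b : R) : expi (a + b) = expi a * expi b.
Proof. by rewrite /expi cosD sinD; simpc; congr (_ +i* _); ring. Qed.

Lemma expi0 : expi (0 : R) = 1.
Proof. by rewrite /expi cos0 sin0. Qed.

Lemma expi_neq0 (t : R) : expi t != 0.
Proof. by apply: contra_eq_neq (expiD t (- t)) => ->; rewrite subrr expi0 mul0r oner_neq0. Qed.

Lemma expiN (t : R) : expi (- t) = (expi t)^-1.
Proof.
by rewrite -[LHS]mul1r -(mulVf (expi_neq0 t)) -mulrA -expiD subrr expi0 mulr1.
Qed.

Lemma expi_pow (t : R) (k : nat) : expi t ^+ k = expi (k%:R * t).
Proof.
elim: k => [|k IH]; first by rewrite expr0 mul0r expi0.
by rewrite exprS IH mulrS mulrDl mul1r expiD.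
Qed.

Lemma expiZ_pow (t : R) (k : nat) : expiZ t ^+ k = expiZ (k%:R * t).
Proof.
elim: k => [|k IH]; first by rewrite expr0 mul0r /expiZ oppr0 expi0 mx2_id.
rewrite exprS IH /expiZ mul_mx2 !mulr0 !mul0r !addr0 !add0r.
by rewrite mulrS mulrDl mul1r opprD !expiD.
Qed.

Definition expi_pauliX (p : R) : 'M[C]_2 :=
  mx2 (cos p)%:C (Ii R * (sin p)%:C) (Ii R * (sin p)%:C) (cos p)%:C.

Lemma Hm_conj (M : 'M[C]_2) :
  Hm R * M * Hm R = ((2 : R)^-1)%:C *: (mx2 1 1 1 (-1) * M * mx2 1 1 1 (-1)).
Proof.
by rewrite /Hm -scalerAl -scalerAr -scalerAl scalerA -rmorphM -invfM -expr2 sqr_sqrtr.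
Qed.

Lemma HmK : Hm R * Hm R = 1.
Proof.
have := Hm_conj 1; rewrite !mulr1 => ->; rewrite mul_mx2 scale_mx2 -mx2_id.
by congr mx2; simpc_real; congr (_ +i* _); field.
Qed.

Lemma Hm_Wm (t : R) : 0 <= t <= pi -> Hm R * Wm (cos t) * Hm R = expiZ t.
Proof.
move=> t0pi; rewrite Hm_conj /Wm.
have -> : Num.sqrt (1 - cos t ^+ 2) = sin t.
  by rewrite -sin2cos2 sqrtr_sqr ger0_norm // sin_ge0_pi.
rewrite !mul_mx2 scale_mx2 /expiZ /expi cosN sinN.
by congr mx2; simpc_real; congr (_ +i* _); field.
Qed.

Lemma Hm_expiZ (p : R) : Hm R * expiZ p * Hm R = expi_pauliX p.
Proof.
rewrite Hm_conj /expiZ !mul_mx2 scale_mx2 /expi_pauliX /expi cosN sinN.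
by congr mx2; simpc_real; congr (_ +i* _); field.
Qed.

Lemma Hm_Un (n : nat) (Psi : nat -> R) (t : R) : 0 <= t <= pi ->
  Hm R * Un n Psi (cos t) * Hm R =
  expi_pauliX (Psi 0%N) * \prod_(1 <= k < n.+1) (expiZ t * expi_pauliX (Psi k)).
Proof.
move=> t0pi; rewrite /Un conj_mul ?HmK // Hm_expiZ conj_prod ?HmK //.
by congr (_ * _); apply: eq_bigr => k _; rewrite conj_mul ?HmK // Hm_Wm // Hm_expiZ.
Qed.

Lemma invsqrt_1_tan2 (p : R) : 0 < cos p -> (Num.sqrt (1 + tan p ^+ 2))^-1 = cos p.
Proof.
move=> cp; have cp0 : cos p != 0 by rewrite gt_eqF.
have -> : 1 + tan p ^+ 2 = (cos p)^-1 ^+ 2 by rewrite /tan exprMn sin2cos2; field.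
by rewrite sqrtr_sqr ger0_norm ?invrK // invr_ge0 ltW.
Qed.

Lemma nlft_factor_expiZ_pow (g : int -> C) (t p : R) (k : nat) : 0 < cos p ->
  g k%:Z = Ii R * (tan p)%:C ->
  nlft_factor g k%:Z (expi (2 * t)) * expiZ t ^+ k = expiZ t ^+ k * expi_pauliX p.
Proof.
move=> cp gk; rewrite /nlft_factor gk expiZ_pow.
have -> : Ii R * (tan p)%:C = 0 +i* tan p by simpc_real.
have -> : csqnorm (0 +i* tan p) = tan p ^+ 2 by rewrite /csqnorm /= expr0n add0r.
rewrite invsqrt_1_tan2 // -exprnP -exprnN expi_pow.
have -> : k%:R * (2 * t) = k%:R * t + k%:R * t by ring.
rewrite expiD /expiZ expiN.
have E0 := expi_neq0 (k%:R * t); set E := expi (k%:R * t).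
have -> : - conjc (0 +i* tan p) = Ii R * (tan p)%:C by simpc_real.
have -> : 0 +i* tan p = Ii R * (tan p)%:C by simpc_real.
have cpC : (cos p)%:C != 0 by rewrite (inj_eq (@complexI R)) gt_eqF.
rewrite /tan fmorph_div /expi_pauliX scale_mx2 !mul_mx2.
by congr mx2; field; rewrite ?E0 ?cpC.
Qed.

Definition Sm : 'M[C]_2 := mx2 1 0 0 (Ii R).
Definition Sm_inv : 'M[C]_2 := mx2 1 0 0 (- Ii R).

Lemma SmK : Sm_inv * Sm = 1.
Proof. by rewrite mul_mx2 -mx2_id; congr mx2; simpc_real; congr (_ +i* _); ring. Qed.

Lemma SmVK : Sm * Sm_inv = 1.
Proof. by rewrite mul_mx2 -mx2_id; congr mx2; simpc_real; congr (_ +i* _); ring. Qed.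

Lemma Sm_expiZ (t : R) : Sm * expiZ t * Sm_inv = expiZ t.
Proof.
by rewrite /expiZ /expi !mul_mx2; congr mx2; simpc_real; congr (_ +i* _); ring.
Qed.

Lemma Sm_nlft_factor (g : int -> C) (k : int) (z : C) :
  Sm * nlft_factor (fun j => Ii R * g j) k z * Sm_inv = nlft_factor g k z.
Proof.
rewrite /nlft_factor.
have -> : csqnorm (Ii R * g k) = csqnorm (g k).
  by case: (g k) => a b; rewrite /csqnorm /Ii /=; simpc; ring.
rewrite -scalerAr -scalerAl !mul_mx2.
move: (g k) (z ^ k) (z ^ (- k)) => [a b] [u1 u2] [v1 v2].
by congr (_ *: mx2 _ _ _ _); simpc_real; congr (_ +i* _); ring.
Qed.

Lemma Hm_Un_nlft (n : nat) (Psi : nat -> R) (g : int -> C) (t : R) :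
  (forall k, (k <= n)%N -> 0 < cos (Psi k)) ->
  (forall k, (k <= n)%N -> g k%:Z = Ii R * (tan (Psi k))%:C) ->
  0 <= t <= pi ->
  Hm R * Un n Psi (cos t) * Hm R = nlft g 0 n (expi (2 * t)) * expiZ (n%:R * t).
Proof.
move=> cosPsi gPsi t0pi; rewrite Hm_Un // -expiZ_pow /nlft.
apply: (@prod_interleave_pow _ (expiZ t) (fun k => expi_pauliX (Psi k))
  (fun k : nat => nlft_factor g (0 + k%:Z) (expi (2 * t)))) => k kn.
rewrite add0r.
exact: nlft_factor_expiZ_pow (cosPsi k kn) (gPsi k kn).
Qed.

End Matrices.

Theorem lemma3p1 (R : realType) (n : nat) (Psi : nat -> R)
  (hPsi : forall k : nat, (k <= n)%N -> - (pi / 2) < Psi k < pi / 2) :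
  (let gam := fun k : int =>
      if (0 <= k) && (k <= n%:Z) then (tan (Psi `|k|%N))%:C else 0 in
   forall theta : R, 0 <= theta <= pi ->
     mx2 1 0 0 (Ii R) * Hm R * Un n Psi (cos theta) * Hm R * mx2 1 0 0 (- Ii R)
     = nlft gam 0 n (expi (2 * theta))
         * mx2 (expi (n%:R * theta)) 0 0 (expi (- (n%:R * theta))))
  /\
  (let gam := fun k : int =>
      if (0 <= k) && (k <= n%:Z) then Ii R * (tan (Psi `|k|%N))%:C else 0 in
   forall theta : R, 0 <= theta <= pi ->
     Hm R * Un n Psi (cos theta) * Hm R
     = nlft gam 0 n (expi (2 * theta))
         * mx2 (expi (n%:R * theta)) 0 0 (expi (- (n%:R * theta)))).
Proof.
have cosPsi k (kn : (k <= n)%N) : 0 < cos (Psi k) := cos_gt0_pihalf (hPsi k kn).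
split => gam t t0pi.
- have -> : mx2 1 0 0 (Ii R) * Hm R * Un n Psi (cos t) * Hm R * mx2 1 0 0 (- Ii R)
      = Sm R * (Hm R * Un n Psi (cos t) * Hm R) * Sm_inv R by rewrite !mulrA.
  rewrite (@Hm_Un_nlft _ _ _ (fun j => Ii R * gam j)) => // [|k kn]; last first.
    by rewrite /gam /= lez_nat kn.
  rewrite conj_mul ?SmK // Sm_expiZ /nlft conj_prod ?SmK ?SmVK //.
  by congr (_ * _); apply: eq_bigr => i _; rewrite Sm_nlft_factor.
- by apply: Hm_Un_nlft => // k kn; rewrite /gam /= lez_nat kn.
Qed.
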